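(* For any initial vector $v_0\in\mathbb{R}^d$ (such that the normalized vectors below are defined) and all $i\in[n]$, $$\|P\widehat v_i\|_2\le\sqrt{\alpha}+\|Pv_0\|_2/\|v_i\|_2.$$ Further, if $v_0=v^*$, then $\|P\widehat v_i\|_2\le\sqrt{\alpha}$.
   Context: Setting: $\phi(x_1),\dots,\phi(x_n)\in\mathbb{R}^d$ are feature vectors of samples $x_1,\dots,x_n$; $\eta\in(0,0.1)$; $\beta\ge\alpha>0$; $v^*\in\mathbb{R}^d$ satisfies $\|v^*\|_2=1$, $\eta\sum_{i=1}^n\langle v^*,\phi(x_i)\rangle^2=\beta$, and $\eta\sum_{i=1}^n\langle w,\phi(x_i)\rangle^2\le\alpha$ for every $w$ with $\|w\|_2\le 1$ and $\langle w,v^*\rangle=0$. $P=I-v^*(v^* )^\top$. Given $v_0$, the iterates are $v_i=v_{i-1}+\eta\langle\phi(x_i),v_{i-1}\rangle\phi(x_i)$ for $i\in[n]$, and $\widehat v_i=v_i/\|v_i\|_2$. *)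

From HB Require Import structures.
From mathcomp Require Import all_boot all_order all_algebra.
From mathcomp Require Import reals.
Set Implicit Arguments. Unset Strict Implicit. Unset Printing Implicit Defensive.
Import Order.TTheory GRing.Theory Num.Theory.
Local Open Scope ring_scope.

Definition dotv (R : realType) (d : nat) (u v : 'rV[R]_d) : R := (u *m v^T) 0 0.

Definition norm2 (R : realType) (d : nat) (v : 'rV[R]_d) : R := Num.sqrt (dotv v v).

(* P = I - v* v*^T applied to w *)
Definition projP (R : realType) (d : nat) (vs w : 'rV[R]_d) : 'rV[R]_d :=
  w - dotv w vs *: vs.

(* iterates: v_0 given, v_i = v_{i-1} + eta <phi(x_i), v_{i-1}> phi(x_i);
   phi i stands for phi(x_i), i = 1..n (phi 0 unused) *)
Fixpoint oja_iter (R : realType) (d : nat) (eta : R) (phi : nat -> 'rV[R]_d)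
  (v0 : 'rV[R]_d) (i : nat) : 'rV[R]_d :=
  match i with
  | 0 => v0
  | k.+1 => let w := oja_iter eta phi v0 k in
            w + (eta * dotv (phi k.+1) w) *: phi k.+1
  end.

Definition normalize (R : realType) (d : nat) (v : 'rV[R]_d) : 'rV[R]_d :=
  (norm2 v)^-1 *: v.

(* The orthogonal part of v_i - v_0 is a combination of the phi_j with
   coefficients eta <phi_j, v_(j-1)>.  Cauchy-Schwarz splits its squared norm
   into the energy eta sum_j <phi_j, v_(j-1)>^2, which is at most ||v_i||^2
   because step j adds at least eta <phi_j, v_(j-1)>^2 to the squared norm,
   and the energy of the orthogonal part itself along the phi_j, which is at
   most alpha times its squared norm by the spectral gap hypothesis.  Hence
   the orthogonal drift is at most sqrt(alpha) ||v_i||, and the triangle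
   inequality adds P v_0. *)
From HB Require Import structures.
From mathcomp Require Import all_boot all_order all_algebra.
From mathcomp Require Import reals ring lra.
Import Order.TTheory GRing.Theory Num.Theory.
Local Open Scope ring_scope.
Set Implicit Arguments. Unset Strict Implicit. Unset Printing Implicit Defensive.

Lemma CauchySchwarz_sum (R : realDomainType) (I : Type) (r : seq I) (a b : I -> R) :
  (\sum_(i <- r) a i * b i) ^+ 2 <=
  (\sum_(i <- r) a i ^+ 2) * (\sum_(i <- r) b i ^+ 2).
Proof.
set A := \sum_(i <- r) a i ^+ 2; set B := \sum_(i <- r) b i ^+ 2.
set C := \sum_(i <- r) a i * b i.
have AB : A * B = \sum_(i <- r) \sum_(j <- r) a i ^+ 2 * b j ^+ 2.
  by rewrite mulr_suml; apply: eq_bigr => i _; rewrite mulr_sumr.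
have BA : A * B = \sum_(i <- r) \sum_(j <- r) a j ^+ 2 * b i ^+ 2.
  by rewrite AB exchange_big.
have CC : C ^+ 2 = \sum_(i <- r) \sum_(j <- r) (a i * b i) * (a j * b j).
  by rewrite expr2 mulr_suml; apply: eq_bigr => i _; rewrite mulr_sumr.
have lagrange : 2 * (A * B - C ^+ 2) =
    \sum_(i <- r) \sum_(j <- r) (a i * b j - a j * b i) ^+ 2.
  have -> : 2 * (A * B - C ^+ 2) = A * B + A * B - 2 * C ^+ 2 by ring.
  rewrite {1}AB BA CC mulr_sumr -!big_split -sumrB /=; apply: eq_bigr => i _.
  rewrite mulr_sumr -!big_split -sumrB /=; apply: eq_bigr => j _; ring.
have : 0 <= 2 * (A * B - C ^+ 2).
  by rewrite lagrange; do 2!apply: sumr_ge0 => ? _; apply: sqr_ge0.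
by rewrite pmulr_rge0 // subr_ge0.
Qed.

Section InnerProduct.
Variables (R : realType) (d : nat).
Implicit Types (u v w : 'rV[R]_d) (a : R).

Lemma dotvE u v : dotv u v = \sum_k u 0 k * v 0 k.
Proof. by rewrite /dotv mxE; apply: eq_bigr => k _; rewrite mxE. Qed.

Lemma dotvC u v : dotv u v = dotv v u.
Proof. by rewrite !dotvE; apply: eq_bigr => k _; rewrite mulrC. Qed.

Lemma dotvDl u v w : dotv (u + v) w = dotv u w + dotv v w.
Proof. by rewrite !dotvE -big_split; apply: eq_bigr => k _; rewrite mxE mulrDl. Qed.

Lemma dotvBl u v w : dotv (u - v) w = dotv u w - dotv v w.
Proof. by rewrite !dotvE -sumrB; apply: eq_bigr => k _; rewrite !mxE mulrBl. Qed.

Lemma dotvZl a u w : dotv (a *: u) w = a * dotv u w.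
Proof. by rewrite !dotvE mulr_sumr; apply: eq_bigr => k _; rewrite mxE mulrA. Qed.

Lemma dotvDr u v w : dotv w (u + v) = dotv w u + dotv w v.
Proof. by rewrite !(dotvC w) dotvDl. Qed.

Lemma dotvBr u v w : dotv w (u - v) = dotv w u - dotv w v.
Proof. by rewrite !(dotvC w) dotvBl. Qed.

Lemma dotvZr a u w : dotv w (a *: u) = a * dotv w u.
Proof. by rewrite !(dotvC w) dotvZl. Qed.

Lemma dotv_ge0 u : 0 <= dotv u u.
Proof. by rewrite dotvE; apply: sumr_ge0 => k _; rewrite -expr2 sqr_ge0. Qed.

Lemma dotv_CauchySchwarz u v : dotv u v ^+ 2 <= dotv u u * dotv v v.
Proof.
have sq w : dotv w w = \sum_k w 0 k ^+ 2.
  by rewrite dotvE; apply: eq_bigr => k _; rewrite expr2.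
by rewrite dotvE !sq CauchySchwarz_sum.
Qed.

Lemma norm2_ge0 u : 0 <= norm2 u.
Proof. exact: sqrtr_ge0. Qed.

Lemma sqr_norm2 u : norm2 u ^+ 2 = dotv u u.
Proof. exact/sqr_sqrtr/dotv_ge0. Qed.

Lemma norm2Z a u : 0 <= a -> norm2 (a *: u) = a * norm2 u.
Proof.
move=> a_ge0; rewrite /norm2 dotvZl dotvZr mulrA -expr2 sqrtrM ?sqr_ge0 //.
by rewrite sqrtr_sqr ger0_norm.
Qed.

Lemma norm20 : norm2 (0 : 'rV[R]_d) = 0.
Proof. by rewrite -(scale0r 0) norm2Z // mul0r. Qed.

Lemma dotv_le_norm2 u v : dotv u v <= norm2 u * norm2 v.
Proof.
rewrite /norm2 -sqrtrM ?dotv_ge0 //; apply: le_trans (ler_norm _) _.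
by rewrite -sqrtr_sqr ler_wsqrtr // dotv_CauchySchwarz.
Qed.

Lemma norm2D u v : norm2 (u + v) <= norm2 u + norm2 v.
Proof.
rewrite -ler_sqr ?nnegrE ?addr_ge0 ?norm2_ge0 //.
rewrite sqrrD !sqr_norm2 dotvDl !dotvDr (dotvC v u).
have := dotv_le_norm2 u v; lra.
Qed.

End InnerProduct.

Section Projection.
Variables (R : realType) (d : nat) (vs : 'rV[R]_d).
Hypothesis vs_unit : norm2 vs = 1.
Implicit Types (u v : 'rV[R]_d) (a : R).

Lemma projPD u v : projP vs (u + v) = projP vs u + projP vs v.
Proof. by rewrite /projP dotvDl scalerDl opprD addrACA. Qed.

Lemma projPZ a u : projP vs (a *: u) = a *: projP vs u.
Proof. by rewrite /projP dotvZl scalerBr scalerA. Qed.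

Lemma dotv_unit : dotv vs vs = 1.
Proof. by rewrite -sqr_norm2 vs_unit expr1n. Qed.

Lemma projP_id : projP vs vs = 0.
Proof. by rewrite /projP dotv_unit scale1r subrr. Qed.

Lemma dotv_projP_unit u : dotv (projP vs u) vs = 0.
Proof. by rewrite /projP dotvBl dotvZl dotv_unit mulr1 subrr. Qed.

Lemma dotv_projP u : dotv (projP vs u) (projP vs u) = dotv (projP vs u) u.
Proof. by rewrite {2}/projP dotvBr dotvZr dotv_projP_unit mulr0 subr0. Qed.

End Projection.

Section OjaIterates.
Variables (R : realType) (d : nat) (phi : nat -> 'rV[R]_d) (eta : R).
Local Notation v v0 i := (oja_iter eta phi v0 i).

Lemma dotv_oja_iter_sub u v0 i :
  dotv u (v v0 i - v0) =
  eta * \sum_(1 <= j < i.+1) dotv (phi j) (v v0 j.-1) * dotv u (phi j).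
Proof.
elim: i => [|i IH]; first by rewrite big_geq // dotvBr subrr mulr0.
by rewrite big_nat_recr //= mulrDr -IH addrAC [LHS]dotvDr dotvZr mulrA.
Qed.

Hypothesis eta_ge0 : 0 <= eta.

Lemma oja_iter_energy v0 i :
  eta * \sum_(1 <= j < i.+1) dotv (phi j) (v v0 j.-1) ^+ 2
  <= dotv (v v0 i) (v v0 i).
Proof.
elim: i => [|i IH]; first by rewrite big_geq // mulr0 dotv_ge0.
rewrite big_nat_recr //= dotvDl !dotvDr !dotvZl !dotvZr.
set w := v v0 i; set p := phi i.+1; rewrite (dotvC w p); set x := dotv p w.
have sqr_step_ge0 : 0 <= eta * x * (eta * x * dotv p p).
  by rewrite mulrA -expr2 mulr_ge0 ?sqr_ge0 ?dotv_ge0.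
have step_ge0 : 0 <= eta * x ^+ 2 by rewrite mulr_ge0 ?sqr_ge0.
have -> : eta * x * x = eta * x ^+ 2 by rewrite expr2 mulrA.
rewrite mulrDr; lra.
Qed.

End OjaIterates.

Section SpectralGap.
Variables (R : realType) (d n : nat) (phi : nat -> 'rV[R]_d) (eta alpha : R).
Variable vs : 'rV[R]_d.
Hypotheses (vs_unit : norm2 vs = 1) (eta_ge0 : 0 <= eta) (alpha_ge0 : 0 <= alpha).
Hypothesis gap : forall w : 'rV[R]_d, norm2 w <= 1 -> dotv w vs = 0 ->
  eta * (\sum_(1 <= j < n.+1) dotv w (phi j) ^+ 2) <= alpha.
Local Notation v v0 i := (oja_iter eta phi v0 i).

Lemma orth_energy_le u : dotv u vs = 0 ->
  eta * \sum_(1 <= j < n.+1) dotv u (phi j) ^+ 2 <= alpha * dotv u u.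
Proof.
move=> u_orth; have := dotv_ge0 u; rewrite le0r => /predU1P[U0 | U_gt0].
  rewrite U0 mulr0 big1 ?mulr0 // => j _; apply/eqP; rewrite eq_le sqr_ge0 andbT.
  by have := dotv_CauchySchwarz u (phi j); rewrite U0 mul0r.
set c := (norm2 u)^-1.
have c_ge0 : 0 <= c by rewrite invr_ge0 norm2_ge0.
have c2 : c ^+ 2 = (dotv u u)^-1 by rewrite exprVn sqr_norm2.
have := gap (w := c *: u).
rewrite norm2Z // mulVf ?lexx; last by rewrite sqrtr_eq0 -ltNge.
rewrite dotvZl u_orth mulr0 => /(_ isT erefl).
have -> : \sum_(1 <= j < n.+1) dotv (c *: u) (phi j) ^+ 2 =
    c ^+ 2 * \sum_(1 <= j < n.+1) dotv u (phi j) ^+ 2.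
  by rewrite mulr_sumr; apply: eq_bigr => j _; rewrite dotvZl exprMn.
by rewrite c2 mulrCA -ler_pdivrMr // mulrC.
Qed.

Lemma norm2_projP_oja_drift v0 i : (i <= n)%N ->
  norm2 (projP vs (v v0 i - v0)) <= Num.sqrt alpha * norm2 (v v0 i).
Proof.
move=> le_in; set u := projP vs (v v0 i - v0).
set U := dotv u u; set W := dotv (v v0 i) (v v0 i).
set X := \sum_(1 <= j < i.+1) dotv (phi j) (v v0 j.-1) ^+ 2.
set Y := \sum_(1 <= j < i.+1) dotv u (phi j) ^+ 2.
have XW : eta * X <= W by apply: oja_iter_energy.
have YU : eta * Y <= alpha * U.
  apply: le_trans (orth_energy_le (dotv_projP_unit vs_unit _)).
  rewrite ler_wpM2l // [leRHS](big_cat_nat (n := i.+1)) //= lerDl.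
  by apply: sumr_ge0 => j _; apply: sqr_ge0.
have UXY : U ^+ 2 <= (eta * X) * (eta * Y).
  rewrite /U (dotv_projP vs_unit) dotv_oja_iter_sub exprMn.
  by rewrite [leRHS]mulrACA -expr2 ler_wpM2l ?sqr_ge0 // CauchySchwarz_sum.
have UW : U <= alpha * W.
  have := dotv_ge0 u; rewrite -/U le0r => /predU1P[-> | U_gt0].
    by rewrite mulr_ge0 ?dotv_ge0.
  rewrite -(ler_pM2r U_gt0) -expr2 (le_trans UXY) //.
  have -> : alpha * W * U = W * (alpha * U) by ring.
  apply: ler_pM => //; rewrite mulr_ge0 ?sumr_ge0 // => j _; exact: sqr_ge0.
by rewrite /norm2 -/U -/W -sqrtrM // ler_wsqrtr.
Qed.

Lemma norm2_projP_normalize_oja v0 i : (i <= n)%N ->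
  norm2 (projP vs (normalize (v v0 i)))
    <= Num.sqrt alpha + norm2 (projP vs v0) / norm2 (v v0 i).
Proof.
move=> le_in; rewrite /normalize projPZ norm2Z ?invr_ge0 ?norm2_ge0 //.
have [-> | N_neq0] := eqVneq (norm2 (v v0 i)) 0.
  by rewrite invr0 mul0r mulr0 addr0 sqrtr_ge0.
have N_gt0 : 0 < norm2 (v v0 i) by rewrite lt_def N_neq0 norm2_ge0.
rewrite [leLHS]mulrC ler_pdivrMr // mulrDl divfK //.
have -> : projP vs (v v0 i) = projP vs v0 + projP vs (v v0 i - v0).
  by rewrite -projPD addrC subrK.
apply: le_trans (norm2D _ _) _; rewrite addrC lerD2r.
exact: norm2_projP_oja_drift.
Qed.

End SpectralGap.

Theorem lemmaC1 (R : realType) (d n : nat) (phi : nat -> 'rV[R]_d)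
  (eta alpha beta : R) (vs : 'rV[R]_d) :
  0 < eta -> eta < 1 / 10 ->
  0 < alpha -> alpha <= beta ->
  norm2 vs = 1 ->
  eta * (\sum_(1 <= i < n.+1) (dotv vs (phi i)) ^+ 2) = beta ->
  (forall w : 'rV[R]_d, norm2 w <= 1 -> dotv w vs = 0 ->
     eta * (\sum_(1 <= i < n.+1) (dotv w (phi i)) ^+ 2) <= alpha) ->
  (forall v0 : 'rV[R]_d,
     (forall i, (1 <= i <= n)%N -> oja_iter eta phi v0 i != 0) ->
     forall i, (1 <= i <= n)%N ->
       norm2 (projP vs (normalize (oja_iter eta phi v0 i)))
         <= Num.sqrt alpha + norm2 (projP vs v0) / norm2 (oja_iter eta phi v0 i))
  /\
  (forall i, (1 <= i <= n)%N ->
       norm2 (projP vs (normalize (oja_iter eta phi vs i))) <= Num.sqrt alpha).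
Proof.
move=> eta_gt0 _ alpha_gt0 _ vs_unit _ gap.
have bound := norm2_projP_normalize_oja vs_unit (ltW eta_gt0) (ltW alpha_gt0) gap.
split=> [v0 _ i /andP[_ le_in] | i /andP[_ le_in]]; first exact: bound.
by have := bound vs i le_in; rewrite projP_id // norm20 mul0r addr0.
Qed.
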